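(* Assume the AGD setting below with controlled step-size parameters (conditions (A1)–(A4) with constants $\alpha,\epsilon_F,\epsilon_B$), and let $c_1,c_2>0$. Suppose there is an update to $p_j$ at time $t$, and let $\Phi^-$ and $\Phi^+$ be the values of the potential $\Phi$ just before and just after this update. Let the updates in $(\tau_j,t)$ be to coordinates $k_1,\dots,k_m$ at times $\beta_1<\dots<\beta_m$. Then $$\Phi^--\Phi^+\ge\Big(1-\frac1\alpha-2\epsilon_B-c_1(1+4\epsilon_B)-2\epsilon_F\Big)\frac{\gamma_j^t(\Delta p_j)^2}{\Delta t_j}+\big(1-c_2-c_1(2+8\epsilon_B)\big)\sum_{i=1}^m\xi_j^{\beta_i}H_{k_ij}^{[\beta_i,t]}(p_j^t)\frac{(\Delta p_{k_i})^2}{\Delta t_{k_i}}.$$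
   Context: Let $\phi:\mathbb{R}^n\to\mathbb{R}$ be a twice continuously differentiable convex function whose minimum value is $0$. Asynchronous gradient descent (AGD) runs in continuous time $t\ge0$ from $p^0$; each coordinate $p_j$ is changed only at discrete update times, no two updates occur simultaneously. For a quantity changed at time $t$, superscript $t$ or $t-$ denotes its value just before and $t+$ just after; $p^t$ is the current point just before any update at time $t$. For an update to $p_j$ at time $t$, $\tau_j$ is the time of the previous update to $p_j$ ($0$ if none), $\Delta t_j=t-\tau_j\le1$ always. $P_j^{[t_1,t_2]}(s)$ is the box of points $p'$ with $p'_j=s$ and, for $k\ne j$, $p'_k$ ranging over the closed interval spanned by $\{p_k^{t'}:t'\in[t_1,t_2]\}$. Update rule: $p_j^{t+}=p_j^t-\frac{\tilde g_j(t)}{\gamma_j^t}\Delta t_j$, $\tilde g_j(t)=\nabla_j\phi(\tilde p^{j,t})$ for some $\tilde p^{j,t}\in P_j^{[\tau_j,t]}(p_j^t)$, $\gamma_j^t>0$; $\Delta p_j=p_j^{t+}-p_j^t$; $g_j(t)=\nabla_j\phi(p^t)$. $H_{k\ell}(S)=\sup_{p'\in S}|\partial^2\phi/\partial p_k\partial p_\ell(p')|$, $H_{k\ell}^{[t_1,t_2]}(s)=H_{k\ell}(P_\ell^{[t_1,t_2]}(s))$. Controlled: constants $\alpha\ge2$, $\epsilon_F,\epsilon_B>0$, $\frac1\alpha+2\epsilon_B+2\epsilon_F<1$, and for each update of $p_j$ at time $t$ positive numbers $\{\xi_k^t\}_{k\ne j}$, with: (A1) for every $p'$ with $p'_k=p_k^t$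 ($k\ne j$) and $p'_j$ between $p_j^t$ and $p_j^{t+}$, $\phi(p')-\phi(p^t)-\nabla_j\phi(p^t)(p'_j-p_j^t)\le\frac{\gamma_j^t}{\alpha}(p'_j-p_j^t)^2$; (A2) $\gamma_j^t\le\bar\gamma_j<\infty$ for all update times of $p_j$; (A3) $\sum_{k\ne j}\xi_k^tH_{jk}^{[t,\sigma_k]}(p_k^t)\le\epsilon_F\gamma_j^t$, $\sigma_k>t$ the next update time of $p_k$; (A4) if the updates in $(\tau_j,t)$ are to $k_1,\dots,k_m$ at times $\beta_1<\dots<\beta_m$ and $\xi_j^{\beta_i}$ is the number assigned to coordinate $j$ at the update at time $\beta_i$, then $\sum_{k\ne j}(\max_{i:k_i=k}1/\xi_j^{\beta_i})H_{kj}^{[\tau_j,t]}(p_j^t)\le\epsilon_B\gamma_j^t$ (empty max read as $0$). Potential: at any time $t$ (with, for each $j$, $\tau_j$ the time of the most recent update to $p_j$ so far and $\sigma_j$ the time of the next update to $p_j$ after $\tau_j$), $$\Phi=\phi(p^t)-c_1\sum_j\int_{\tau_j}^t\frac{(g_j(t'))^2}{\bar\gamma_j}dt'+\sum_j\sum_i\xi_j^{\beta_i}H_{k_ij}^{[\beta_i,\sigma_j]}(p_j^{\tau_j+})\frac{(\Delta p_{k_i})^2}{\Delta t_{k_i}}\big[2-c_2(t-\beta_i)\big],$$ where for each $j$ the index $i$ runs over all updates, at times $\beta_i\in(\tau_j,t]$, to coordinates $k_i\ne j$, and $\Delta p_{k_i},\Delta t_{k_i}$ are the change and elapsed time of that update.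 *)

From Stdlib Require Import Reals Lra Lia ClassicalEpsilon.
Open Scope R_scope.

(* Points of R^n are represented as functions nat -> R; only the
   coordinates 0..n-1 are meaningful (phi is assumed to depend only on them). *)
Definition point := nat -> R.

Definition upd (x : point) (k : nat) (s : R) : point :=
  fun i => if Nat.eqb i k then s else x i.

Definition between (s a b : R) : Prop := (a <= s <= b) \/ (b <= s <= a).

Definition supR (E : R -> Prop) : R := epsilon (inhabits 0) (fun h => is_lub E h).

Definition Rint (f : R -> R) (a b : R) : R :=
  epsilon (inhabits 0)
    (fun v => exists pr : Riemann_integrable f a b, RiemannInt pr = v).

Fixpoint rsum (f : nat -> R) (m : nat) : R :=
  match m with O => 0 | S m' => rsum f m' + f m' end.

(* ---- the update schedule ----
   Update number i (i = 0,1,2,...) happens at time T i and changes coordinate J i.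
   P i is the point after the first i updates (P 0 = p^0), i.e. the point just
   before update i; P (S i) is the point just after update i. *)

Fixpoint last_idx (J : nat -> nat) (j m : nat) : option nat :=
  match m with
  | O => None
  | S m' => if Nat.eqb (J m') j then Some m' else last_idx J j m'
  end.

(* tau_j when m updates have been performed (0 if none to j) *)
Definition tau (T : nat -> R) (J : nat -> nat) (j m : nat) : R :=
  match last_idx J j m with Some i => T i | None => 0 end.

(* index of the first update after tau_j (0 if no update to j yet) *)
Definition first_after (J : nat -> nat) (j m : nat) : nat :=
  match last_idx J j m with Some i => S i | None => O end.

Definition next_idx (J : nat -> nat) (k i : nat) : option nat :=
  epsilon (inhabits None)
    (fun o => match o with
              | Some i' => (i <= i')%nat /\ J i' = k /\
                           (forall i'', (i <= i'')%nat -> (i'' < i')%nat -> J i'' <> k)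
              | None => forall i', (i <= i')%nat -> J i' <> k
              end).

(* its time; None encodes +infinity (no further update) *)
Definition next_time (T : nat -> R) (J : nat -> nat) (k i : nat) : option R :=
  match next_idx J k i with Some i' => Some (T i') | None => None end.

(* the state index in force at time t: p^t is the value just before any update at t *)
Definition state_idx (T : nat -> R) (t : R) : nat :=
  epsilon (inhabits O)
    (fun s => (s = O /\ t <= T O) \/ ((0 < s)%nat /\ T (pred s) < t /\ t <= T s)).

Definition traj (T : nat -> R) (P : nat -> point) (t : R) : point := P (state_idx T t).

(* the box P_l^{[t1,t2]}(s); t2 = None means t2 = +infinity *)
Definition box (n : nat) (T : nat -> R) (P : nat -> point) (l : nat)
    (t1 : R) (t2 : option R) (s : R) (q : point) : Prop :=
  q l = s /\
  forall k, (k < n)%nat -> k <> l ->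
    exists a b : R,
      t1 <= a /\ t1 <= b /\
      (match t2 with Some u => a <= u /\ b <= u | None => True end) /\
      traj T P a k <= q k <= traj T P b k.

Definition Hsup (hess : nat -> nat -> point -> R) (k l : nat) (S : point -> Prop) : R :=
  supR (fun h => exists q, S q /\ h = Rabs (hess k l q)).

Definition HB (n : nat) (T : nat -> R) (P : nat -> point) (hess : nat -> nat -> point -> R)
    (k l : nat) (t1 : R) (t2 : option R) (s : R) : R :=
  Hsup hess k l (box n T P l t1 t2 s).

Definition dp (P : nat -> point) (J : nat -> nat) (i : nat) : R := P (S i) (J i) - P i (J i).
Definition dt (T : nat -> R) (J : nat -> nat) (i : nat) : R := T i - tau T J (J i) i.

Fixpoint maxinv (J : nat -> nat) (xi : nat -> nat -> R) (j k lo hi : nat) : R :=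
  match hi with
  | O => 0
  | S h => if andb (Nat.leb lo h) (Nat.eqb (J h) k)
           then Rmax (maxinv J xi j k lo h) (/ xi h j)
           else maxinv J xi j k lo h
  end.

Definition Phi (n : nat) (phi : point -> R) (grad : nat -> point -> R)
    (hess : nat -> nat -> point -> R) (T : nat -> R) (J : nat -> nat) (P : nat -> point)
    (gbar : nat -> R) (xi : nat -> nat -> R) (c1 c2 : R) (m : nat) (t : R) : R :=
  phi (P m)
  - c1 * rsum (fun j => Rint (fun t' => (grad j (traj T P t'))^2) (tau T J j m) t / gbar j) n
  + rsum (fun j =>
       rsum (fun i =>
          if Nat.leb (first_after J j m) i then
            xi i j * HB n T P hess (J i) j (T i) (next_time T J j (first_after J j m))
                          (P (first_after J j m) j)
              * (dp P J i)^2 / dt T J i * (2 - c2 * (t - T i))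
          else 0) m) n.

(* At an update of [p_j] the potential drops by the decrease of [phi], minus the part of the
   gradient integral lost on (tau_j, t], plus the reset backward terms of [p_j], minus the new
   forward terms charged to the other coordinates.  By (A1) the decrease of [phi] is at least
   (1 - 1/alpha) gamma (dp_j)^2 / dt_j, up to the error E |dp_j| made by using the gradient at the
   stale point p~^{j,t}; E = sum_i H_{k_i j} |dp_{k_i}| bounds the drift of grad_j phi over the box
   P_j^[tau_j, t], by moving one coordinate at a time and applying the mean value theorem.
   Cauchy-Schwarz gives E^2 <= A B, where A is the backward energy on the right-hand side and
   B = sum_i H_{k_i j} dt_{k_i} / xi_j^{beta_i}; by (A4), and because the dt of the updates of
   each coordinate telescope, B <= eps_B gamma (1 + dt_j).  AM-GM then absorbs both E |dp_j| and
   the gradient integral into A and gamma (dp_j)^2 / dt_j, while (A3) bounds the new forward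
   terms. *)

From Stdlib Require Import Reals Lra Lia List.
From Stdlib Require Import ClassicalEpsilon FunctionalExtensionality PropExtensionality.
Open Scope R_scope.

Lemma rsum_ext f g m : (forall i, (i < m)%nat -> f i = g i) -> rsum f m = rsum g m.
Proof.
  induction m as [|m IH]; intros Hfg; simpl; auto.
  rewrite IH by (intros i Hi; apply Hfg; lia). rewrite (Hfg m) by lia. reflexivity.
Qed.

Lemma rsum_le f g m : (forall i, (i < m)%nat -> f i <= g i) -> rsum f m <= rsum g m.
Proof.
  induction m as [|m IH]; intros Hfg; simpl; [lra|].
  assert (rsum f m <= rsum g m) by (apply IH; intros; apply Hfg; lia).
  specialize (Hfg m ltac:(lia)). lra.
Qed.

Lemma rsum_const0 m : rsum (fun _ => 0) m = 0.
Proof. induction m; simpl; lra. Qed.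

Lemma rsum_nonneg f m : (forall i, (i < m)%nat -> 0 <= f i) -> 0 <= rsum f m.
Proof. intros Hf. rewrite <- (rsum_const0 m). now apply rsum_le. Qed.

Lemma rsum_plus f g m : rsum (fun i => f i + g i) m = rsum f m + rsum g m.
Proof. induction m; simpl; lra. Qed.

Lemma rsum_minus f g m : rsum (fun i => f i - g i) m = rsum f m - rsum g m.
Proof. induction m; simpl; lra. Qed.

Lemma rsum_scal c f m : rsum (fun i => c * f i) m = c * rsum f m.
Proof. induction m; simpl; lra. Qed.

Lemma rsum_swap (F : nat -> nat -> R) m n :
  rsum (fun i => rsum (fun k => F i k) n) m = rsum (fun k => rsum (fun i => F i k) m) n.
Proof.
  induction m as [|m IH]; simpl; [now rewrite rsum_const0|].
  now rewrite IH, <- rsum_plus.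
Qed.

Lemma rsum_extract (a : nat) (X : R) (Y : nat -> R) n : (a < n)%nat ->
  rsum (fun k => if Nat.eqb k a then X else Y k) n
  = X + rsum (fun k => if Nat.eqb k a then 0 else Y k) n.
Proof.
  induction n as [|n IH]; intros Ha; [lia|]. simpl.
  destruct (Nat.eqb_spec n a) as [->|Hne].
  - assert (Hbelow : forall Z, rsum (fun k => if Nat.eqb k a then Z else Y k) a = rsum Y a).
    { intro Z. apply rsum_ext. intros i Hi. destruct (Nat.eqb_spec i a); [lia|auto]. }
    rewrite !Hbelow. lra.
  - rewrite IH by lia. lra.
Qed.

Lemma rsum_single (a : nat) (X : R) n : (a < n)%nat ->
  rsum (fun k => if Nat.eqb k a then X else 0) n = X.
Proof.
  intros Ha. rewrite rsum_extract by auto.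
  rewrite (rsum_ext _ (fun _ => 0)), rsum_const0; [lra|].
  intros i _. now destruct (Nat.eqb i a).
Qed.

Lemma Cauchy_Schwarz_step S X Y e a b :
  0 <= S -> 0 <= e -> 0 <= X -> 0 <= Y -> 0 <= a -> 0 <= b ->
  S^2 <= X * Y -> e^2 <= a * b -> (S + e)^2 <= (X + a) * (Y + b).
Proof.
  intros HS He HX HY Ha Hb HSXY Heab.
  assert (Hcross : 2 * S * e <= X * b + a * Y).
  { assert (Hprod : 4 * S^2 * e^2 <= 4 * (X * Y) * (a * b)).
    { pose proof (pow2_ge_0 S). apply Rmult_le_compat; [lra|apply pow2_ge_0|lra|lra]. }
    assert (Hsq : (2 * S * e)^2 <= (X * b + a * Y)^2).
    { pose proof (pow2_ge_0 (X * b - a * Y)). nra. }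
    assert (0 <= X * b + a * Y)
      by (pose proof (Rmult_le_pos X b); pose proof (Rmult_le_pos a Y); lra).
    destruct (Rle_lt_dec (2 * S * e) (X * b + a * Y)) as [|Hlt]; auto.
    assert (0 < (2 * S * e - (X * b + a * Y)) * (2 * S * e + (X * b + a * Y)))
      by (apply Rmult_lt_0_compat; lra).
    nra. }
  nra.
Qed.

Lemma rsum_Cauchy_Schwarz (e a b : nat -> R) m :
  (forall i, (i < m)%nat -> 0 <= e i /\ 0 <= a i /\ 0 <= b i /\ (e i)^2 <= a i * b i) ->
  (rsum e m)^2 <= rsum a m * rsum b m.
Proof.
  induction m as [|m IH]; intros Hi; simpl; [lra|].
  assert (IHm : (rsum e m)^2 <= rsum a m * rsum b m) by (apply IH; intros; apply Hi; lia).
  destruct (Hi m ltac:(lia)) as (? & ? & ? & ?).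
  apply Cauchy_Schwarz_step; auto; apply rsum_nonneg; intros; apply Hi; lia.
Qed.

Definition rsum_from (lo : nat) (f : nat -> R) (m : nat) : R :=
  rsum (fun i => if Nat.leb lo i then f i else 0) m.

Lemma rsum_from_empty lo f m : (m <= lo)%nat -> rsum_from lo f m = 0.
Proof.
  unfold rsum_from. induction m as [|m IH]; intros Hm; simpl; auto.
  rewrite IH by lia. destruct (Nat.leb_spec lo m); [lia|lra].
Qed.

Lemma rsum_from_first lo f m : (lo < m)%nat ->
  rsum_from lo f m = f lo + rsum_from (S lo) f m.
Proof.
  unfold rsum_from. induction m as [|m IH]; intros Hm; [lia|]. cbn [rsum].
  destruct (Nat.eq_dec lo m) as [->|Hne].
  - rewrite Nat.leb_refl. destruct (Nat.leb_spec (S m) m); [lia|].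
    pose proof (rsum_from_empty m f m (le_n m)) as E1.
    pose proof (rsum_from_empty (S m) f m ltac:(lia)) as E2.
    unfold rsum_from in E1, E2. lra.
  - rewrite IH by lia.
    destruct (Nat.leb_spec lo m), (Nat.leb_spec (S lo) m); try lia; lra.
Qed.

Lemma rsum_from_le lo f g m : (forall i, (lo <= i < m)%nat -> f i <= g i) ->
  rsum_from lo f m <= rsum_from lo g m.
Proof.
  intros Hfg. apply rsum_le. intros i Hi.
  destruct (Nat.leb_spec lo i); [apply Hfg; lia|lra].
Qed.

Lemma rsum_from_nonneg lo f m : (forall i, (lo <= i < m)%nat -> 0 <= f i) ->
  0 <= rsum_from lo f m.
Proof.
  intros Hf. apply rsum_nonneg. intros i Hi.
  destruct (Nat.leb_spec lo i); [apply Hf; lia|lra].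
Qed.

Lemma rsum_from_plus lo f g m :
  rsum_from lo (fun i => f i + g i) m = rsum_from lo f m + rsum_from lo g m.
Proof.
  unfold rsum_from. rewrite <- rsum_plus. apply rsum_ext. intros i _.
  destruct (Nat.leb lo i); lra.
Qed.

Lemma rsum_from_scal lo c f m :
  rsum_from lo (fun i => c * f i) m = c * rsum_from lo f m.
Proof.
  unfold rsum_from. rewrite <- rsum_scal. apply rsum_ext. intros i _.
  destruct (Nat.leb lo i); lra.
Qed.

Lemma rsum_from_Cauchy_Schwarz lo (e a b : nat -> R) m :
  (forall i, (lo <= i < m)%nat -> 0 <= e i /\ 0 <= a i /\ 0 <= b i /\ (e i)^2 <= a i * b i) ->
  (rsum_from lo e m)^2 <= rsum_from lo a m * rsum_from lo b m.
Proof.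
  intros Hi. apply rsum_Cauchy_Schwarz. intros i Him.
  destruct (Nat.leb_spec lo i); [apply Hi; lia|]. repeat split; lra.
Qed.

Lemma rsum_from_telescope_bound (f : nat -> R) (X : nat -> R) lo m : (lo <= m)%nat ->
  (forall r, (lo <= r < m)%nat -> Rabs (f r - f (S r)) <= X r) ->
  Rabs (f lo - f m) <= rsum_from lo X m.
Proof.
  intros Hlo Hstep. remember (m - lo)%nat as d eqn:Hd. revert lo Hlo Hstep Hd.
  induction d as [|d IH]; intros lo Hlo Hstep Hd.
  - replace lo with m by lia. rewrite Rminus_diag, Rabs_R0, rsum_from_empty by lia. lra.
  - rewrite rsum_from_first by lia.
    assert (Hrest : Rabs (f (S lo) - f m) <= rsum_from (S lo) X m)
      by (apply IH; [lia|intros; apply Hstep; lia|lia]).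
    pose proof (Hstep lo ltac:(lia)).
    pose proof (Rabs_triang (f lo - f (S lo)) (f (S lo) - f m)).
    replace (f lo - f (S lo) + (f (S lo) - f m)) with (f lo - f m) in * by ring. lra.
Qed.

Lemma rsum_from_group_by (c : nat -> nat) (F : nat -> nat -> R) lo m n :
  (forall i, (c i < n)%nat) ->
  rsum_from lo (fun i => F (c i) i) m
  = rsum (fun k => rsum_from lo (fun i => if Nat.eqb k (c i) then F k i else 0) m) n.
Proof.
  intros Hc. unfold rsum_from. rewrite <- rsum_swap. apply rsum_ext. intros i _.
  destruct (Nat.leb lo i).
  - rewrite <- (rsum_single (c i) (F (c i) i) n (Hc i)). apply rsum_ext. intros k _.
    rewrite Nat.eqb_sym. now destruct (Nat.eqb_spec (c i) k) as [->|].
  - now rewrite rsum_const0.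
Qed.

Lemma maxinv_nonneg J xi j k lo hi : 0 <= maxinv J xi j k lo hi.
Proof.
  induction hi as [|hi IH]; simpl; [lra|].
  destruct (andb _ _); auto. eapply Rle_trans; [eauto|apply Rmax_l].
Qed.

Lemma maxinv_ge J xi j k lo hi i : (lo <= i < hi)%nat -> J i = k ->
  / xi i j <= maxinv J xi j k lo hi.
Proof.
  induction hi as [|hi IH]; intros Hi Hk; [lia|]. simpl.
  destruct (Nat.eq_dec i hi) as [->|Hne].
  - rewrite (proj2 (Nat.leb_le lo hi)), Hk, Nat.eqb_refl by lia. apply Rmax_r.
  - destruct (andb _ _); [eapply Rle_trans; [apply IH; auto; lia|apply Rmax_l]|apply IH; auto; lia].
Qed.

Lemma sqr_plus_le_weighted a e lam : 0 < lam -> (a + e)^2 <= (1 + lam) * a^2 + (1 + /lam) * e^2.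
Proof.
  intros H. assert (0 <= (lam * a - e)^2 / lam).
  { unfold Rdiv. apply Rmult_le_pos; [apply pow2_ge_0|left; apply Rinv_0_lt_compat; auto]. }
  assert ((1 + lam) * a^2 + (1 + /lam) * e^2 - (a + e)^2 = (lam * a - e)^2 / lam) by (field; lra).
  lra.
Qed.

Lemma abs_mul_le_weighted H w d x y : 0 <= H -> 0 < w -> 0 < d ->
  H * Rabs x * Rabs y <= w * H * x^2 / d + H * d * y^2 / (4 * w).
Proof.
  intros HH Hw Hd.
  assert (E : w * H * x^2 / d + H * d * y^2 / (4 * w) - H * Rabs x * Rabs y
              = H * ((2 * w * Rabs x - d * Rabs y)^2 / (4 * w * d))).
  { rewrite <- (pow2_abs x), <- (pow2_abs y). field. lra. }
  assert (0 <= H * ((2 * w * Rabs x - d * Rabs y)^2 / (4 * w * d))).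
  { apply Rmult_le_pos; auto. unfold Rdiv.
    apply Rmult_le_pos; [apply pow2_ge_0|left; apply Rinv_0_lt_compat; nra]. }
  lra.
Qed.

Lemma Rint_eq f a b (pr : Riemann_integrable f a b) : Rint f a b = RiemannInt pr.
Proof.
  unfold Rint.
  assert (H : (fun v => exists pr : Riemann_integrable f a b, RiemannInt pr = v)
     (epsilon (inhabits 0) (fun v => exists pr : Riemann_integrable f a b, RiemannInt pr = v))).
  { apply epsilon_spec. exists (RiemannInt pr), pr. auto. }
  destruct H as [pr' <-]. apply RiemannInt_P5.
Qed.

Lemma Rint_refl f a : Rint f a a = 0.
Proof. rewrite (Rint_eq f a a (RiemannInt_P7 f a)). apply RiemannInt_P9. Qed.

Lemma Rint_bound f a b M : Riemann_integrable f a b -> a <= b ->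
  (forall x, a < x < b -> 0 <= f x <= M) -> 0 <= Rint f a b <= M * (b - a).
Proof.
  intros pr Hab H. rewrite (Rint_eq f a b pr).
  pose proof (@RiemannInt_const_bound f a b 0 M pr Hab H). lra.
Qed.

Lemma IsStepFun_const_open f a b c : a <= b -> (forall x, a < x < b -> f x = c) -> IsStepFun f a b.
Proof.
  intros Hab H. exists (cons a (cons b nil)), (cons c nil).
  repeat split.
  - intros [|i] Hi; simpl in *; [auto|lia].
  - simpl. unfold Rmin. destruct (Rle_dec a b); lra.
  - simpl. unfold Rmax. destruct (Rle_dec a b); lra.
  - intros [|i] Hi; simpl in *; [auto|lia].
Qed.

Lemma Riemann_integrable_const_open f a b c : a <= b -> (forall x, a < x < b -> f x = c) ->
  Riemann_integrable f a b.
Proof.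
  intros Hab H eps.
  exists (mkStepFun (IsStepFun_const_open f a b c Hab H)), (mkStepFun (StepFun_P4 a b 0)). split.
  - intros t Ht. simpl. unfold fct_cte. rewrite Rminus_diag, Rabs_R0. lra.
  - rewrite StepFun_P18, Rmult_0_l, Rabs_R0. apply cond_pos.
Qed.

(** * Continuous functions are bounded on boxes *)

Definition bounded_near (n : nat) (f : point -> R) (lo hi : nat -> R) (d : nat) (x : point)
    (dl M : R) : Prop :=
  0 < dl /\ forall y, (forall i, (i < d)%nat -> lo i <= y i <= hi i) ->
     (forall i, (d <= i < n)%nat -> Rabs (y i - x i) < dl) -> Rabs (f y) <= M.

Lemma fold_Rmin_pos (g : R -> R) l : (forall s, In s l -> 0 < g s) ->
  0 < fold_right (fun s acc => Rmin (g s) acc) 1 l.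
Proof. induction l; simpl; intros H; [lra|]. apply Rmin_pos; auto. Qed.

Lemma fold_Rmin_le (g : R -> R) l s : In s l -> fold_right (fun s acc => Rmin (g s) acc) 1 l <= g s.
Proof.
  induction l as [|a l IH]; simpl; intros H; [contradiction|].
  destruct H as [->|H]; [apply Rmin_l|]. eapply Rle_trans; [apply Rmin_r|auto].
Qed.

Lemma fold_Rmax_ge (g : R -> R) l s : In s l -> g s <= fold_right (fun s acc => Rmax (g s) acc) 0 l.
Proof.
  induction l as [|a l IH]; simpl; intros H; [contradiction|].
  destruct H as [->|H]; [apply Rmax_l|]. eapply Rle_trans; [apply IH; auto|apply Rmax_r].
Qed.

Section BoundedOnBoxes.

Variables (n : nat) (f : point -> R) (lo hi : nat -> R).
Hypothesis Hf : forall x eps, 0 < eps -> exists d, 0 < d /\ forall y,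
  (forall i, (i < n)%nat -> Rabs (y i - x i) < d) -> Rabs (f y - f x) < eps.

(* Induction on the number of confined coordinates; the step covers the compact
   interval [lo d, hi d] by finitely many of the neighbourhoods given by induction. *)
Lemma bounded_near_exists d : (d <= n)%nat ->
  forall x, exists dl M, bounded_near n f lo hi d x dl M.
Proof.
  induction d as [|d IH]; intros Hd x.
  - destruct (Hf x 1 ltac:(lra)) as (dl & Hdl & H). exists dl, (Rabs (f x) + 1). split; auto.
    intros y _ Hy. assert (Rabs (f y - f x) < 1) by (apply H; intros; apply Hy; lia).
    pose proof (Rabs_triang_inv (f y) (f x)). lra.
  - destruct (Rlt_le_dec (hi d) (lo d)) as [Hempty|Hlh].
    { exists 1, 0. split; [lra|]. intros y Hy _. specialize (Hy d ltac:(lia)). lra. }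
    set (spec := fun s (p : R * R) => bounded_near n f lo hi d (upd x d s) (fst p) (snd p)).
    set (ch := fun s => epsilon (inhabits (1, 0)) (spec s)).
    assert (Hch : forall s, spec s (ch s)).
    { intros s. apply epsilon_spec. destruct (IH ltac:(lia) (upd x d s)) as (a & b & H).
      now exists (a, b). }
    set (Dl := fun s => fst (ch s)). set (Mf := fun s => snd (ch s)).
    assert (HD : forall s, 0 < Dl s) by (intros s; now destruct (Hch s)).
    assert (Hcond : forall s, (exists z, lo d <= s <= hi d /\ Rabs (z - s) < Dl s) ->
                              lo d <= s <= hi d) by (intros s (z & ? & ?); auto).
    set (fam := mkfamily (fun s => lo d <= s <= hi d)
                  (fun s z => lo d <= s <= hi d /\ Rabs (z - s) < Dl s) Hcond).
    assert (Hcov : covering_open_set (fun c => lo d <= c <= hi d) fam).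
    { split.
      - intros z Hz. exists z. simpl. split; auto. rewrite Rminus_diag, Rabs_R0. apply HD.
      - intros s z [Hs Hz]. assert (Hp : 0 < Dl s - Rabs (z - s)) by lra.
        exists (mkposreal _ Hp). intros w Hw. unfold disc in Hw. simpl in *. split; auto.
        pose proof (Rabs_triang (w - z) (z - s)).
        replace (w - z + (z - s)) with (w - s) in * by ring.
        lra. }
    destruct (compact_P3 (lo d) (hi d) fam Hcov) as (D' & Hcv & l & Hl).
    exists (fold_right (fun s acc => Rmin (Dl s) acc) 1 l),
           (fold_right (fun s acc => Rmax (Mf s) acc) 0 l).
    split; [apply fold_Rmin_pos; intros; apply HD|].
    intros y Hy Hy2.
    destruct (Hcv (y d) (Hy d ltac:(lia))) as (s & ((Hs1 & Hs2) & HsD)).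
    assert (Hin : In s l) by (apply Hl; simpl; split; auto).
    eapply Rle_trans; [|apply (fold_Rmax_ge Mf l s Hin)].
    destruct (Hch s) as [_ Hb]. apply Hb.
    + intros i Hi; apply Hy; lia.
    + intros i Hi. unfold upd. destruct (Nat.eqb_spec i d) as [->|]; auto.
      eapply Rlt_le_trans; [apply Hy2; lia|]. apply (fold_Rmin_le Dl l s Hin).
Qed.

Lemma bounded_on_box : exists M, forall y, (forall i, (i < n)%nat -> lo i <= y i <= hi i) ->
  Rabs (f y) <= M.
Proof.
  destruct (bounded_near_exists n (le_n n) (fun _ => 0)) as (dl & M & _ & H).
  exists M. intros y Hy. apply H; auto. intros; lia.
Qed.

End BoundedOnBoxes.

Lemma supR_lub E : bound E -> (exists x, E x) -> is_lub E (supR E).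
Proof.
  intros Hb Hn. unfold supR. apply epsilon_spec.
  destruct (completeness E Hb Hn) as [m Hm]. now exists m.
Qed.

Section Hsup.

Variables (hess : nat -> nat -> point -> R) (k l : nat).

Definition Hsup_is_lub (S : point -> Prop) : Prop :=
  is_lub (fun h => exists q, S q /\ h = Rabs (hess k l q)) (Hsup hess k l S).

Lemma Hsup_lub (S : point -> Prop) :
  (exists M, forall q, S q -> Rabs (hess k l q) <= M) -> (exists q, S q) -> Hsup_is_lub S.
Proof.
  intros (M & HM) (q & Hq). apply supR_lub.
  - exists M. intros h (q' & ? & ->). auto.
  - exists (Rabs (hess k l q)), q. auto.
Qed.

Lemma Hsup_ge S q : Hsup_is_lub S -> S q -> Rabs (hess k l q) <= Hsup hess k l S.
Proof. intros [H _] Hq. apply H. now exists q. Qed.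

Lemma Hsup_nonneg S q : Hsup_is_lub S -> S q -> 0 <= Hsup hess k l S.
Proof. intros H Hq. eapply Rle_trans; [apply Rabs_pos|]. eapply Hsup_ge; eauto. Qed.

Lemma Hsup_mono (S1 S2 : point -> Prop) : Hsup_is_lub S1 -> Hsup_is_lub S2 ->
  (forall q, S1 q -> S2 q) -> Hsup hess k l S1 <= Hsup hess k l S2.
Proof. intros [_ H1] [H2 _] Hs. apply H1. intros h (q & Hq & ->). apply H2. exists q; auto. Qed.

End Hsup.

Lemma upd_upd z k c s : upd (upd z k c) k s = upd z k s.
Proof. apply functional_extensionality. intros i. unfold upd. now destruct (Nat.eqb i k). Qed.

Lemma upd_same z k s : upd z k s k = s.
Proof. unfold upd. now rewrite Nat.eqb_refl. Qed.

Lemma upd_other z k s i : i <> k -> upd z k s i = z i.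
Proof. intros H. unfold upd. now rewrite (proj2 (Nat.eqb_neq _ _) H). Qed.

Lemma upd_id z k : upd z k (z k) = z.
Proof.
  apply functional_extensionality. intros i. unfold upd.
  now destruct (Nat.eqb_spec i k) as [->|].
Qed.

Lemma partial_derivative_ext n (phi : point -> R) (grad : nat -> point -> R)
  (Hphi_n : forall x y : point, (forall i, (i < n)%nat -> x i = y i) -> phi x = phi y)
  (Hgrad : forall k x, (k < n)%nat -> derivable_pt_lim (fun s => phi (upd x k s)) (x k) (grad k x))
  k x y : (k < n)%nat -> (forall i, (i < n)%nat -> x i = y i) -> grad k x = grad k y.
Proof.
  intros Hk Hxy. pose proof (Hgrad k x Hk) as Dx. pose proof (Hgrad k y Hk) as Dy.
  rewrite <- (Hxy k Hk) in Dy.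
  replace (fun s => phi (upd y k s)) with (fun s => phi (upd x k s)) in Dy.
  - eapply uniqueness_limite; eauto.
  - apply functional_extensionality. intros s. apply Hphi_n. intros i Hi.
    unfold upd. destruct (Nat.eqb i k); auto.
Qed.

Lemma mean_value_bound_upd (g h : point -> R) k
  (Hg : forall x, derivable_pt_lim (fun s => g (upd x k s)) (x k) (h x))
  z u v H : (forall s, Rmin u v <= s <= Rmax u v -> Rabs (h (upd z k s)) <= H) ->
  Rabs (g (upd z k v) - g (upd z k u)) <= H * Rabs (v - u).
Proof.
  intros Hb.
  assert (Hd : forall c, derivable_pt_lim (fun s => g (upd z k s)) c (h (upd z k c))).
  { intros c. pose proof (Hg (upd z k c)) as D. rewrite upd_same in D.
    replace (fun s => g (upd z k s)) with (fun s => g (upd (upd z k c) k s)); auto.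
    apply functional_extensionality; intros s; now rewrite upd_upd. }
  destruct (Rtotal_order u v) as [Huv|[<-|Huv]].
  - destruct (MVT_cor2 (fun s => g (upd z k s)) (fun s => h (upd z k s)) u v Huv (fun c _ => Hd c))
      as (c & Hc & Hc2).
    rewrite Hc, Rabs_mult. apply Rmult_le_compat_r; [apply Rabs_pos|]. apply Hb.
    unfold Rmin, Rmax; destruct (Rle_dec u v); lra.
  - rewrite !Rminus_diag, Rabs_R0.
    assert (0 <= H) by (eapply Rle_trans; [apply Rabs_pos|apply (Hb u)];
                        unfold Rmin, Rmax; destruct (Rle_dec u u); lra).
    lra.
  - destruct (MVT_cor2 (fun s => g (upd z k s)) (fun s => h (upd z k s)) v u Huv (fun c _ => Hd c))
      as (c & Hc & Hc2).
    rewrite <- Rabs_Ropp, Ropp_minus_distr, Hc, Rabs_mult, <- (Rabs_Ropp (v - u)), Ropp_minus_distr.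
    apply Rmult_le_compat_r; [apply Rabs_pos|]. apply Hb.
    unfold Rmin, Rmax; destruct (Rle_dec u v); lra.
Qed.

Definition clamp (a b v : R) : R := Rmax a (Rmin b v).

Lemma clamp_in a b v : a <= b -> a <= clamp a b v <= b.
Proof. unfold clamp, Rmax, Rmin. intros. destruct (Rle_dec b v), (Rle_dec a _); lra. Qed.

Lemma clamp_id a b v : a <= v <= b -> clamp a b v = v.
Proof. unfold clamp, Rmax, Rmin. intros. destruct (Rle_dec b v), (Rle_dec a _); lra. Qed.

Lemma clamp_cases a b w : a <= b ->
  (w <= a /\ clamp a b w = a) \/ (a <= w <= b /\ clamp a b w = w) \/ (b <= w /\ clamp a b w = b).
Proof.
  intros H. unfold clamp. destruct (Rle_dec b w).
  - rewrite Rmin_left, Rmax_right by lra. auto.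
  - rewrite Rmin_right by lra. destruct (Rle_dec a w).
    + rewrite Rmax_right by lra. right; left; split; auto; lra.
    + rewrite Rmax_left by lra. left; split; auto; lra.
Qed.

Lemma clamp_extend_dist p p' a' b' w : a' <= p' <= b' ->
  Rabs (clamp (Rmin p a') (Rmax p b') w - clamp a' b' w) <= Rabs (p' - p).
Proof.
  intros H.
  assert (Hlo : (Rmin p a' = p /\ p <= a') \/ (Rmin p a' = a' /\ a' < p)).
  { unfold Rmin; destruct (Rle_dec p a'); [left|right]; split; auto; lra. }
  assert (Hhi : (Rmax p b' = b' /\ p <= b') \/ (Rmax p b' = p /\ b' < p)).
  { unfold Rmax; destruct (Rle_dec p b'); [left|right]; split; auto; lra. }
  destruct Hlo as [[-> ?]|[-> ?]]; destruct Hhi as [[-> ?]|[-> ?]]; try lra;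
  (destruct (clamp_cases a' b' w ltac:(lra)) as [[? Ec]|[[? Ec]|[? Ec]]]; rewrite ?Ec);
  try (match goal with |- context [clamp ?x ?y w] =>
         destruct (clamp_cases x y w ltac:(lra)) as [[? ->]|[[? ->]|[? ->]]] end);
  unfold Rabs; repeat match goal with |- context [Rcase_abs ?x] => destruct (Rcase_abs x) end; lra.
Qed.

Fixpoint coord_min (P : nat -> point) (k r c : nat) : R :=
  match c with O => P r k | S c' => Rmin (P r k) (coord_min P k (S r) c') end.
Fixpoint coord_max (P : nat -> point) (k r c : nat) : R :=
  match c with O => P r k | S c' => Rmax (P r k) (coord_max P k (S r) c') end.

Lemma coord_minmax_bounds P k c : forall r s, (r <= s <= r + c)%nat ->
  coord_min P k r c <= P s k <= coord_max P k r c.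
Proof.
  induction c as [|c IH]; intros r s Hs; simpl.
  - replace s with r by lia. lra.
  - destruct (Nat.eq_dec s r) as [->|Hne]; [split; [apply Rmin_l|apply Rmax_l]|].
    destruct (IH (S r) s ltac:(lia)).
    split; [eapply Rle_trans; [apply Rmin_r|auto]|eapply Rle_trans; [eauto|apply Rmax_r]].
Qed.

Lemma coord_min_le_max P k r c : coord_min P k r c <= coord_max P k r c.
Proof. pose proof (coord_minmax_bounds P k c r r ltac:(lia)). lra. Qed.

Lemma coord_min_attained P k c :
  forall r, exists s, (r <= s <= r + c)%nat /\ coord_min P k r c = P s k.
Proof.
  induction c as [|c IH]; intros r; simpl; [exists r; split; auto; lia|].
  destruct (IH (S r)) as (s & ? & ->). unfold Rmin. destruct (Rle_dec (P r k) (P s k)).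
  - exists r; split; auto; lia.
  - exists s; split; auto; lia.
Qed.

Lemma coord_max_attained P k c :
  forall r, exists s, (r <= s <= r + c)%nat /\ coord_max P k r c = P s k.
Proof.
  induction c as [|c IH]; intros r; simpl; [exists r; split; auto; lia|].
  destruct (IH (S r)) as (s & ? & ->). unfold Rmax. destruct (Rle_dec (P r k) (P s k)).
  - exists s; split; auto; lia.
  - exists r; split; auto; lia.
Qed.

Lemma coord_minmax_step P k r m : (r < m)%nat ->
  coord_min P k r (m - r) = Rmin (P r k) (coord_min P k (S r) (m - S r)) /\
  coord_max P k r (m - r) = Rmax (P r k) (coord_max P k (S r) (m - S r)).
Proof. intros H. replace (m - r)%nat with (S (m - S r)) by lia. simpl. auto. Qed.

Lemma coord_minmax_step_const P k r m : (r < m)%nat -> P (S r) k = P r k ->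
  coord_min P k r (m - r) = coord_min P k (S r) (m - S r) /\
  coord_max P k r (m - r) = coord_max P k (S r) (m - S r).
Proof.
  intros Hrm HP. destruct (coord_minmax_step P k r m Hrm) as [-> ->]. rewrite <- HP.
  pose proof (coord_minmax_bounds P k (m - S r) (S r) (S r) ltac:(lia)).
  split; [unfold Rmin|unfold Rmax]; destruct (Rle_dec _ _); lra.
Qed.

(** * The asynchronous schedule *)

Section AGD.

Variables (T : nat -> R) (J : nat -> nat).
Hypothesis HT0 : 0 < T O.
Hypothesis HTinc : forall i, T i < T (S i).

Lemma T_lt i i' : (i < i')%nat -> T i < T i'.
Proof. induction 1; [apply HTinc|]. eapply Rlt_trans; eauto. Qed.

Lemma T_le i i' : (i <= i')%nat -> T i <= T i'.
Proof. intros H. destruct (Nat.eq_dec i i') as [->|]; [lra|]. left; apply T_lt; lia. Qed.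

(* The time at which the state [P s] comes into force (0 for the initial state). *)
Definition prevT (s : nat) : R := match s with O => 0 | S s' => T s' end.

Lemma prevT_lt s : prevT s < T s.
Proof. destruct s; simpl; auto. Qed.

Lemma last_idx_Some k m l : last_idx J k m = Some l ->
  (l < m)%nat /\ J l = k /\ forall i, (l < i < m)%nat -> J i <> k.
Proof.
  induction m as [|m IH]; simpl; intros H; [discriminate|].
  destruct (Nat.eqb_spec (J m) k).
  - inversion H; subst. repeat split; auto; lia.
  - destruct (IH H) as (? & ? & Hno). split; [lia|split; [auto|]].
    intros i Hi. destruct (Nat.eq_dec i m) as [->|]; auto. apply Hno; lia.
Qed.

Lemma last_idx_None k m : last_idx J k m = None -> forall i, (i < m)%nat -> J i <> k.
Proof.
  induction m as [|m IH]; simpl; intros H i Hi; [lia|].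
  destruct (Nat.eqb_spec (J m) k); [discriminate|].
  destruct (Nat.eq_dec i m) as [->|]; auto. apply IH; auto; lia.
Qed.

Lemma tau_prevT k m : tau T J k m = prevT (first_after J k m).
Proof. unfold tau, first_after. now destruct (last_idx J k m). Qed.

Lemma first_after_le k m : (first_after J k m <= m)%nat.
Proof.
  unfold first_after. destruct (last_idx J k m) eqn:E; [apply last_idx_Some in E|]; lia.
Qed.

Lemma first_after_no_update k m i : (first_after J k m <= i < m)%nat -> J i <> k.
Proof.
  unfold first_after. destruct (last_idx J k m) eqn:E.
  - apply last_idx_Some in E as (_ & _ & Hno). intros; apply Hno; lia.
  - intros; eapply last_idx_None; eauto; lia.
Qed.

Lemma first_after_pred k m l : first_after J k m = S l -> J l = k.
Proof.
  unfold first_after. destruct (last_idx J k m) eqn:E; intros H; [|discriminate].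
  injection H as <-. now apply last_idx_Some in E.
Qed.

Lemma first_after_S_other k m : J m <> k -> first_after J k (S m) = first_after J k m.
Proof. intros H. unfold first_after. simpl. now rewrite (proj2 (Nat.eqb_neq _ _) H). Qed.

Lemma first_after_S_self m : first_after J (J m) (S m) = S m.
Proof. unfold first_after. simpl. now rewrite Nat.eqb_refl. Qed.

Lemma tau_S_other k m : J m <> k -> tau T J k (S m) = tau T J k m.
Proof. intros H. unfold tau. simpl. now rewrite (proj2 (Nat.eqb_neq _ _) H). Qed.

Lemma tau_S_self m : tau T J (J m) (S m) = T m.
Proof. unfold tau. simpl. now rewrite Nat.eqb_refl. Qed.

Lemma tau_le_T k m i : (first_after J k m <= i)%nat -> tau T J k m <= T i.
Proof.
  intros Hi. rewrite tau_prevT. pose proof (prevT_lt (first_after J k m)).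
  pose proof (T_le _ _ Hi). lra.
Qed.

Lemma dt_pos i : 0 < dt T J i.
Proof.
  unfold dt. rewrite tau_prevT. pose proof (prevT_lt (first_after J (J i) i)).
  pose proof (T_le _ _ (first_after_le (J i) i)). lra.
Qed.

Lemma next_idx_Some k i i' : (i <= i')%nat -> J i' = k ->
  (forall i'', (i <= i'')%nat -> (i'' < i')%nat -> J i'' <> k) -> next_idx J k i = Some i'.
Proof.
  intros Hii' Hk Hfirst. unfold next_idx.
  match goal with |- epsilon ?inh ?Pr = _ => assert (HP : Pr (epsilon inh Pr)) end.
  { apply epsilon_spec. exists (Some i'). auto. }
  destruct (epsilon _ _) as [x|]; simpl in HP.
  - destruct HP as (? & ? & Hfirst'). f_equal.
    destruct (Nat.lt_trichotomy x i') as [|[|]]; auto; exfalso.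
    + now apply (Hfirst x).
    + now apply (Hfirst' i').
  - exfalso; now apply (HP i').
Qed.

Lemma next_idx_shift k a b : (a <= b)%nat -> (forall i, (a <= i < b)%nat -> J i <> k) ->
  next_idx J k a = next_idx J k b.
Proof.
  intros Hab Hno. unfold next_idx. f_equal. apply functional_extensionality. intros [x|];
    apply propositional_extensionality; split.
  - intros (? & ? & Hfirst). assert (b <= x)%nat.
    { destruct (Nat.le_gt_cases b x); auto. exfalso; apply (Hno x); auto; lia. }
    repeat split; auto. intros; apply Hfirst; lia.
  - intros (? & ? & Hfirst). repeat split; auto; [lia|]. intros i'' ? ?.
    destruct (Nat.lt_ge_cases i'' b); [apply Hno; lia|apply Hfirst; auto].
  - intros Hnone i' ?; apply Hnone; lia.
  - intros Hnone i' ?. destruct (Nat.lt_ge_cases i' b); [apply Hno; lia|apply Hnone; auto].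
Qed.

Lemma next_time_self m : next_time T J (J m) (first_after J (J m) m) = Some (T m).
Proof.
  unfold next_time. rewrite (next_idx_Some (J m) _ m); auto using first_after_le.
  intros; apply (first_after_no_update (J m) m); lia.
Qed.

Lemma next_time_other m k : k <> J m -> next_time T J k (first_after J k m) = next_time T J k (S m).
Proof.
  intros H. unfold next_time. rewrite (next_idx_shift k (first_after J k m) (S m)); auto.
  - pose proof (first_after_le k m); lia.
  - intros i Hi. destruct (Nat.eq_dec i m) as [->|]; auto.
    apply (first_after_no_update k m); lia.
Qed.

Hypothesis Hdt : forall i, dt T J i <= 1.

(* The [dt] of successive updates to [k] telescope. *)
Lemma dt_sum_bound k lo tau0 : tau0 <= prevT lo -> forall d,
  rsum_from lo (fun i => if Nat.eqb k (J i) then dt T J i else 0) (lo + d)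
    <= Rmax 0 (1 + tau T J k (lo + d) - tau0).
Proof.
  intros Htau0. induction d as [|d IH].
  - rewrite Nat.add_0_r, rsum_from_empty by lia. apply Rmax_l.
  - rewrite Nat.add_succ_r. unfold rsum_from in *. cbn [rsum].
    rewrite (proj2 (Nat.leb_le lo (lo + d))) by lia.
    pose proof (prevT_lt lo). pose proof (T_le lo (lo + d) ltac:(lia)).
    destruct (Nat.eqb_spec k (J (lo + d))) as [->|Hne].
    + rewrite tau_S_self. pose proof (Hdt (lo + d)). unfold dt in *.
      rewrite (Rmax_right 0 (1 + T (lo + d)%nat - tau0)) by lra.
      revert IH. unfold Rmax. destruct (Rle_dec _ _); lra.
    + rewrite tau_S_other by auto. lra.
Qed.

Hypothesis HTunb : forall x, exists i, x < T i.

Definition is_state_idx (a : R) (s : nat) : Prop :=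
  (s = O /\ a <= T O) \/ ((0 < s)%nat /\ T (pred s) < a /\ a <= T s).

Lemma is_state_idx_exists a : exists s, is_state_idx a s.
Proof.
  destruct (HTunb a) as [N HN].
  enough (Hle : forall N, a <= T N -> exists s, is_state_idx a s) by (apply (Hle N); lra).
  induction N0 as [|N0 IH]; intros H.
  - exists O; left; auto.
  - destruct (Rle_lt_dec a (T N0)); auto.
    exists (S N0). right. simpl. split; [lia|lra].
Qed.

Lemma is_state_idx_unique a s s' : is_state_idx a s -> is_state_idx a s' -> s = s'.
Proof.
  assert (Hlt : forall x y, is_state_idx a x -> is_state_idx a y -> (x < y)%nat -> False).
  { intros x y Hx Hy Hxy. destruct Hy as [[? ?]|(? & ? & ?)]; [lia|].
    assert (T x <= T (pred y)) by (apply T_le; lia).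
    destruct Hx as [[? ?]|(? & ? & ?)]; subst; lra. }
  intros Hs Hs'. destruct (Nat.lt_trichotomy s s') as [|[|]]; auto; exfalso; eauto.
Qed.

Lemma state_idx_eq a s : is_state_idx a s -> state_idx T a = s.
Proof.
  intros H. apply (is_state_idx_unique a); auto. unfold state_idx.
  apply (epsilon_spec (inhabits O) (is_state_idx a)). now exists s.
Qed.

Lemma Riemann_integrable_along_schedule (f : R -> R) (F : nat -> R) :
  (forall s x, prevT s < x < T s -> f x = F s) ->
  forall r d, Riemann_integrable f (prevT r) (T (r + d)).
Proof.
  intros Hf r. induction d as [|d IH].
  - rewrite Nat.add_0_r. apply (Riemann_integrable_const_open f _ _ (F r)); [left; apply prevT_lt|].
    intros; apply Hf; auto.
  - apply RiemannInt_P24 with (T (r + d)%nat); auto.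
    rewrite Nat.add_succ_r.
    apply (Riemann_integrable_const_open f _ _ (F (S (r + d)))); [left; apply HTinc|].
    intros x Hx; apply Hf. simpl. auto.
Qed.

Variable P : nat -> point.

Lemma traj_T s : traj T P (T s) = P s.
Proof.
  unfold traj. rewrite (state_idx_eq (T s) s); auto.
  destruct s; [left; split; auto; lra|right; simpl; repeat split; [lia|apply HTinc|lra]].
Qed.

Lemma traj_window r m a : (r <= m)%nat -> prevT r < a -> a <= T m ->
  exists s, (r <= s <= m)%nat /\ traj T P a = P s.
Proof.
  intros Hrm H1 H2. destruct (is_state_idx_exists a) as [s Hs].
  exists s. split; [|unfold traj; now rewrite (state_idx_eq a s)].
  split.
  - destruct (Nat.le_gt_cases r s) as [|Hsr]; auto. exfalso.
    destruct r as [|r]; [lia|]. simpl in H1. assert (T s <= T r) by (apply T_le; lia).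
    destruct Hs as [[-> ?]|(? & ? & ?)]; [lra|].
    assert (T (pred s) < T s) by (apply T_lt; lia). lra.
  - destruct (Nat.le_gt_cases s m); auto. exfalso.
    destruct Hs as [[? ?]|(? & ? & ?)]; [lia|].
    assert (T m <= T (pred s)) by (apply T_le; lia). lra.
Qed.

Lemma traj_window_closed r m a : (r <= m)%nat -> prevT r <= a -> a <= T m ->
  exists s, (pred r <= s <= m)%nat /\ traj T P a = P s.
Proof.
  intros Hrm [H1|<-] H2.
  - destruct (traj_window r m a Hrm H1 H2) as (s & ? & ?). exists s; split; auto; lia.
  - destruct r as [|r]; simpl.
    + exists O. split; [lia|]. unfold traj. rewrite (state_idx_eq 0 O); auto.
      left; split; auto; lra.
    + exists r. split; [lia|]. apply traj_T.
Qed.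

Hypothesis Hupd_other : forall i k, k <> J i -> P (S i) k = P i k.

Lemma P_const k a b : (a <= b)%nat -> (forall i, (a <= i < b)%nat -> J i <> k) -> P b k = P a k.
Proof.
  induction 1 as [|b Hab IH]; intros Hno; auto.
  rewrite Hupd_other by (intros ->; apply (Hno b); auto; lia). apply IH; intros; apply Hno; lia.
Qed.

Lemma P_first_after k m : P (first_after J k m) k = P m k.
Proof. symmetry. apply P_const; [apply first_after_le|apply first_after_no_update]. Qed.

Variable n : nat.

Lemma box_of_coord_ranges l r m s q : (r <= m)%nat -> q l = s ->
  (forall k, (k < n)%nat -> k <> l -> coord_min P k r (m - r) <= q k <= coord_max P k r (m - r)) ->
  box n T P l (T r) (Some (T m)) s q.
Proof.
  intros Hrm Hl H. split; auto. intros k Hk Hkl.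
  destruct (coord_min_attained P k (m - r) r) as (s1 & ? & E1).
  destruct (coord_max_attained P k (m - r) r) as (s2 & ? & E2).
  exists (T s1), (T s2). rewrite !traj_T, <- E1, <- E2.
  repeat split; try (apply T_le; lia); apply H; auto.
Qed.

Lemma coord_ranges_of_box l r m t1 s q : (r <= m)%nat -> prevT r <= t1 ->
  box n T P l t1 (Some (T m)) s q ->
  forall k, (k < n)%nat -> k <> l ->
    coord_min P k (pred r) (m - pred r) <= q k <= coord_max P k (pred r) (m - pred r).
Proof.
  intros Hrm Ht1 [_ Hb] k Hk Hkl. destruct (Hb k Hk Hkl) as (a & b & Ha & Hb' & (Ha2 & Hb2) & Hq).
  destruct (traj_window_closed r m a Hrm ltac:(lra) Ha2) as (s1 & ? & E1).
  destruct (traj_window_closed r m b Hrm ltac:(lra) Hb2) as (s2 & ? & E2).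
  rewrite E1, E2 in Hq.
  pose proof (coord_minmax_bounds P k (m - pred r) (pred r) s1 ltac:(lia)).
  pose proof (coord_minmax_bounds P k (m - pred r) (pred r) s2 ltac:(lia)). lra.
Qed.

Lemma box_upd l t1 m s : t1 <= T m -> box n T P l t1 (Some (T m)) s (upd (P m) l s).
Proof.
  intros H. split; [apply upd_same|]. intros k Hk Hkl. exists (T m), (T m).
  rewrite traj_T, upd_other by auto. repeat split; lra.
Qed.

Variable hess : nat -> nat -> point -> R.
Hypothesis Hcont : forall k l x, (k < n)%nat -> (l < n)%nat ->
  forall eps, 0 < eps -> exists d, 0 < d /\
    forall y : point, (forall i, (i < n)%nat -> Rabs (y i - x i) < d) ->
      Rabs (hess k l y - hess k l x) < eps.

(* Boxes over a bounded time window are bounded, so [HB] is a genuine supremum. *)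
Lemma HB_is_lub k l r m t1 s : (k < n)%nat -> (l < n)%nat -> (r <= m)%nat ->
  prevT r <= t1 -> t1 <= T m ->
  Hsup_is_lub hess k l (box n T P l t1 (Some (T m)) s).
Proof.
  intros Hk Hl Hrm H1 H2. apply Hsup_lub; [|eexists; now apply box_upd].
  destruct (bounded_on_box n (hess k l)
     (fun i => if Nat.eqb i l then s else coord_min P i (pred r) (m - pred r))
     (fun i => if Nat.eqb i l then s else coord_max P i (pred r) (m - pred r))
     (fun x eps He => Hcont k l x Hk Hl eps He)) as (M & HM).
  exists M. intros q Hq. apply HM. intros i Hi. destruct (Nat.eqb_spec i l) as [->|].
  - destruct Hq as [-> _]. lra.
  - eapply coord_ranges_of_box; eauto.
Qed.

Lemma box_start_mono l t1 t1' t2 s q : t1' <= t1 -> box n T P l t1 t2 s q -> box n T P l t1' t2 s q.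
Proof.
  intros Ht [Hl Hb]. split; auto. intros k Hk Hkl.
  destruct (Hb k Hk Hkl) as (a & b & ? & ? & ? & ?). exists a, b. repeat split; auto; lra.
Qed.

(** * Drift of a partial derivative over a box *)

Variables (phi : point -> R) (grad : nat -> point -> R).
Hypothesis Hphi_n : forall x y : point, (forall i, (i < n)%nat -> x i = y i) -> phi x = phi y.
Hypothesis Hgrad : forall k x, (k < n)%nat ->
  derivable_pt_lim (fun s => phi (upd x k s)) (x k) (grad k x).
Hypothesis Hhess : forall k l x, (k < n)%nat -> (l < n)%nat ->
  derivable_pt_lim (fun s => grad l (upd x k s)) (x k) (hess k l x).
Hypothesis HJ : forall i, (J i < n)%nat.

Lemma grad_ext k x y : (k < n)%nat -> (forall i, (i < n)%nat -> x i = y i) -> grad k x = grad k y.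
Proof. now apply (partial_derivative_ext n phi). Qed.

(* For [y] within the ranges of [P fa .. P m], [clamp_window j m fa y] is [y], while
   [clamp_window j m m y] agrees with [P m] off coordinate [j]; from [r] to [S r] only
   coordinate [J r] moves, and by at most [|dp P J r|]. *)
Definition clamp_window (j m r : nat) (y : point) : point :=
  fun k => if Nat.eqb k j then y k
           else clamp (coord_min P k r (m - r)) (coord_max P k r (m - r)) (y k).

Lemma clamp_window_range j m r y k : k <> j ->
  coord_min P k r (m - r) <= clamp_window j m r y k <= coord_max P k r (m - r).
Proof.
  intros Hkj. unfold clamp_window. rewrite (proj2 (Nat.eqb_neq _ _) Hkj).
  apply clamp_in, coord_min_le_max.
Qed.

Section GradientDrift.

Variables (j m fa : nat) (y : point).
Hypothesis Hj : (j < n)%nat.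
Hypothesis Hfa : (fa <= m)%nat.
Hypothesis Hno_j : forall i, (fa <= i < m)%nat -> J i <> j.
Hypothesis Hyj : y j = P m j.

Lemma clamp_window_step_other r k : (r < m)%nat -> k <> J r -> k <> j ->
  clamp_window j m r y k = clamp_window j m (S r) y k.
Proof.
  intros Hr Hk Hkj. unfold clamp_window. rewrite (proj2 (Nat.eqb_neq _ _) Hkj).
  now destruct (coord_minmax_step_const P k r m Hr (Hupd_other r k Hk)) as [-> ->].
Qed.

Lemma clamp_window_segment_in_box r s : (fa <= r < m)%nat ->
  Rmin (clamp_window j m r y (J r)) (clamp_window j m (S r) y (J r)) <= s
    <= Rmax (clamp_window j m r y (J r)) (clamp_window j m (S r) y (J r)) ->
  box n T P j (T r) (Some (T m)) (P m j) (upd (clamp_window j m (S r) y) (J r) s).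
Proof.
  intros Hr Hs. assert (Hkr : J r <> j) by (apply Hno_j; auto).
  apply box_of_coord_ranges; [lia| |].
  - rewrite upd_other by auto. unfold clamp_window. now rewrite Nat.eqb_refl.
  - intros k Hk Hkj. destruct (Nat.eq_dec k (J r)) as [->|Hne].
    + rewrite upd_same.
      pose proof (clamp_window_range j m r y (J r) Hkr) as Hu.
      pose proof (clamp_window_range j m (S r) y (J r) Hkr) as Hv.
      destruct (coord_minmax_step P (J r) r m ltac:(lia)) as [Emin Emax].
      rewrite Emin, Emax in Hu |- *.
      set (u := clamp_window j m r y (J r)) in *. set (v := clamp_window j m (S r) y (J r)) in *.
      set (lo := Rmin (P r (J r)) (coord_min P (J r) (S r) (m - S r))) in *.
      set (hi := Rmax (P r (J r)) (coord_max P (J r) (S r) (m - S r))) in *.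
      assert (lo <= coord_min P (J r) (S r) (m - S r)) by apply Rmin_r.
      assert (coord_max P (J r) (S r) (m - S r) <= hi) by apply Rmax_r.
      pose proof (Rmin_glb u v lo ltac:(lra) ltac:(lra)).
      pose proof (Rmax_lub u v hi ltac:(lra) ltac:(lra)).
      lra.
    + rewrite upd_other, <- clamp_window_step_other by (auto; lia).
      now apply clamp_window_range.
Qed.

Lemma clamp_window_step r : (fa <= r < m)%nat ->
  Rabs (grad j (clamp_window j m r y) - grad j (clamp_window j m (S r) y))
    <= HB n T P hess (J r) j (T r) (Some (T m)) (P m j) * Rabs (dp P J r).
Proof.
  intros Hr. set (kr := J r). assert (Hkr : kr <> j) by (apply Hno_j; auto).
  set (Z := clamp_window j m (S r) y).
  set (u := clamp_window j m r y kr). set (v := Z kr).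
  assert (Hu : grad j (clamp_window j m r y) = grad j (upd Z kr u)).
  { apply grad_ext; auto. intros i _. unfold upd. destruct (Nat.eqb_spec i kr) as [->|]; auto.
    destruct (Nat.eq_dec i j) as [->|]; [unfold Z, clamp_window; now rewrite Nat.eqb_refl|].
    apply clamp_window_step_other; auto; lia. }
  rewrite Hu, <- (upd_id Z kr). fold v. rewrite upd_upd.
  assert (Huv : Rabs (v - u) <= Rabs (dp P J r)).
  { destruct (coord_minmax_step P kr r m ltac:(lia)) as [Emin Emax].
    unfold u, v, Z, clamp_window. rewrite (proj2 (Nat.eqb_neq _ _) Hkr), Emin, Emax, Rabs_minus_sym.
    unfold dp. fold kr. apply clamp_extend_dist.
    pose proof (coord_minmax_bounds P kr (m - S r) (S r) (S r) ltac:(lia)). lra. }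
  pose proof (clamp_window_segment_in_box r) as Hbox. fold kr Z u v in Hbox.
  assert (Hlub : Hsup_is_lub hess kr j (box n T P j (T r) (Some (T m)) (P m j)))
    by exact (HB_is_lub kr j r m (T r) (P m j) (HJ r) Hj ltac:(lia)
                (Rlt_le _ _ (prevT_lt r)) (T_le r m ltac:(lia))).
  assert (HB0 : 0 <= HB n T P hess kr j (T r) (Some (T m)) (P m j))
    by (eapply Hsup_nonneg; [apply Hlub|apply (Hbox u Hr); split; [apply Rmin_l|apply Rmax_l]]).
  pose proof (mean_value_bound_upd (grad j) (hess kr j) kr (fun x => Hhess kr j x (HJ r) Hj) Z u v _
                (fun s Hs => Hsup_ge hess kr j _ _ Hlub (Hbox s Hr Hs))) as Hmvb.
  rewrite Rabs_minus_sym. eapply Rle_trans; [exact Hmvb|]. apply Rmult_le_compat_l; auto.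
Qed.

Hypothesis Hy : forall k, (k < n)%nat -> k <> j ->
  coord_min P k fa (m - fa) <= y k <= coord_max P k fa (m - fa).

Lemma grad_drift_bound :
  Rabs (grad j y - grad j (P m)) <=
  rsum_from fa (fun i => HB n T P hess (J i) j (T i) (Some (T m)) (P m j) * Rabs (dp P J i)) m.
Proof.
  assert (Hfirst : grad j y = grad j (clamp_window j m fa y)).
  { apply grad_ext; auto. intros i Hi. unfold clamp_window.
    destruct (Nat.eqb_spec i j) as [->|]; auto. rewrite clamp_id; auto. }
  assert (Hlast : grad j (clamp_window j m m y) = grad j (P m)).
  { apply grad_ext; auto. intros i Hi. unfold clamp_window.
    destruct (Nat.eqb_spec i j) as [->|]; auto. rewrite Nat.sub_diag. simpl.
    pose proof (clamp_in (P m i) (P m i) (y i) (Rle_refl _)). lra. }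
  rewrite Hfirst, <- Hlast.
  apply (rsum_from_telescope_bound (fun r => grad j (clamp_window j m r y))); auto.
  apply clamp_window_step.
Qed.

End GradientDrift.

Lemma box_tau_coord_ranges l m s q : box n T P l (tau T J l m) (Some (T m)) s q ->
  forall k, (k < n)%nat -> k <> l ->
    coord_min P k (first_after J l m) (m - first_after J l m) <= q k
    <= coord_max P k (first_after J l m) (m - first_after J l m).
Proof.
  intros Hq k Hk Hkl. pose proof (first_after_le l m) as Hfa.
  pose proof (coord_ranges_of_box l (first_after J l m) m _ s q Hfa
                (Req_le _ _ (eq_sym (tau_prevT l m))) Hq k Hk Hkl) as Hrange.
  destruct (first_after J l m) as [|r] eqn:Efa; [exact Hrange|].
  simpl pred in Hrange. apply first_after_pred in Efa.
  destruct (coord_minmax_step_const P k r m ltac:(lia) (Hupd_other r k ltac:(congruence)))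
    as [<- <-].
  exact Hrange.
Qed.

(** * The potential at an update *)

Variables (gam gbar : nat -> R) (xi : nat -> nat -> R) (c1 c2 : R).

Definition Phi_grad (m : nat) (t : R) : R :=
  rsum (fun k => Rint (fun t' => (grad k (traj T P t'))^2) (tau T J k m) t / gbar k) n.

Definition Phi_back (m : nat) (t : R) : R :=
  rsum (fun k =>
    rsum (fun i =>
       if Nat.leb (first_after J k m) i then
         xi i k * HB n T P hess (J i) k (T i) (next_time T J k (first_after J k m))
                    (P (first_after J k m) k)
           * (dp P J i)^2 / dt T J i * (2 - c2 * (t - T i))
       else 0) m) n.

Lemma Phi_split m t :
  Phi n phi grad hess T J P gbar xi c1 c2 m t = phi (P m) - c1 * Phi_grad m t + Phi_back m t.
Proof. reflexivity. Qed.

Variable m : nat.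

Local Notation j := (J m).
Local Notation fa := (first_after J (J m) m).

(* With t = T m: [back_curv i] is H_{k_i j}^{[beta_i, t]}(p_j^t), [step_energy] is
   gamma_j^t (dp_j)^2 / dt_j and [backward_energy] is the sum in the statement. *)
Definition back_curv (i : nat) : R := HB n T P hess (J i) j (T i) (Some (T m)) (P m j).

Definition grad_drift : R := rsum_from fa (fun i => back_curv i * Rabs (dp P J i)) m.

Definition backward_energy : R :=
  rsum_from fa (fun i => xi i j * back_curv i * (dp P J i)^2 / dt T J i) m.

Definition backward_weight : R := rsum_from fa (fun i => back_curv i * dt T J i / xi i j) m.

Definition step_energy : R := gam m * (dp P J m)^2 / dt T J m.

Definition forward_weight : R :=
  rsum (fun k => if Nat.eqb k j then 0 else
          xi m k * HB n T P hess j k (T m) (next_time T J k (S m)) (P m k)) n.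

Lemma Phi_grad_drop :
  Phi_grad m (T m) - Phi_grad (S m) (T m)
  = Rint (fun t' => (grad j (traj T P t'))^2) (tau T J j m) (T m) / gbar j.
Proof.
  unfold Phi_grad. rewrite <- rsum_minus.
  rewrite <- (rsum_single j (Rint (fun t' => (grad j (traj T P t'))^2) (tau T J j m) (T m) / gbar j)
                n (HJ m)).
  apply rsum_ext. intros k _.
  destruct (Nat.eqb_spec k j) as [->|Hkj].
  - rewrite tau_S_self, Rint_refl. lra.
  - rewrite tau_S_other by auto. lra.
Qed.

(* Only the terms of [p_j] are reset by the update; every other coordinate gains the
   term of the new update, whose weight [2 - c2 (t - t)] is [2]. *)
Lemma Phi_back_drop :
  Phi_back m (T m) - Phi_back (S m) (T m)
  = rsum_from fa (fun i => xi i j * back_curv i * (dp P J i)^2 / dt T J i * (2 - c2 * (T m - T i))) m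
    - forward_weight * ((dp P J m)^2 / dt T J m * 2).
Proof.
  unfold Phi_back, forward_weight. rewrite <- rsum_minus.
  rewrite (rsum_ext _ (fun k => if Nat.eqb k j then
      rsum_from fa (fun i => xi i j * back_curv i * (dp P J i)^2 / dt T J i
                              * (2 - c2 * (T m - T i))) m
    else - ((dp P J m)^2 / dt T J m * 2) * (if Nat.eqb k j then 0 else
      xi m k * HB n T P hess j k (T m) (next_time T J k (S m)) (P m k)))).
  - rewrite rsum_extract by apply HJ.
    rewrite (rsum_ext (fun k => if Nat.eqb k j then 0 else _)
               (fun k => - ((dp P J m)^2 / dt T J m * 2) * (if Nat.eqb k j then 0 else
                  xi m k * HB n T P hess j k (T m) (next_time T J k (S m)) (P m k)))),
      rsum_scal; [ring|].
    intros k _. destruct (Nat.eqb k j); ring.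
  - intros k Hk. destruct (Nat.eqb_spec k j) as [->|Hkj].
    + rewrite first_after_S_self.
      fold (rsum_from (S m) (fun i =>
        xi i j * HB n T P hess (J i) j (T i) (next_time T J j (S m)) (P (S m) j)
        * (dp P J i)^2 / dt T J i * (2 - c2 * (T m - T i))) (S m)).
      rewrite rsum_from_empty, Rminus_0_r by lia.
      apply rsum_ext. intros i _. destruct (Nat.leb _ i); auto.
      now rewrite next_time_self, P_first_after.
    + rewrite first_after_S_other by auto. cbn [rsum].
      rewrite (proj2 (Nat.leb_le _ m) (first_after_le k m)).
      rewrite next_time_other, P_first_after by auto.
      replace (T m - T m) with 0 by ring. unfold Rdiv. ring.
Qed.

Lemma Phi_drop_eq :
  Phi n phi grad hess T J P gbar xi c1 c2 m (T m) - Phi n phi grad hess T J P gbar xi c1 c2 (S m) (T m) =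
  phi (P m) - phi (P (S m))
  - c1 * (Rint (fun t' => (grad j (traj T P t'))^2) (tau T J j m) (T m) / gbar j)
  + rsum_from fa (fun i => xi i j * back_curv i * (dp P J i)^2 / dt T J i * (2 - c2 * (T m - T i))) m
  - forward_weight * ((dp P J m)^2 / dt T J m * 2).
Proof.
  rewrite !Phi_split.
  transitivity (phi (P m) - phi (P (S m)) - c1 * (Phi_grad m (T m) - Phi_grad (S m) (T m))
                + (Phi_back m (T m) - Phi_back (S m) (T m))); [ring|].
  rewrite Phi_grad_drop, Phi_back_drop. ring.
Qed.

Hypothesis Hgam : forall i, 0 < gam i.
Hypothesis Hxi : forall i k, (k < n)%nat -> k <> J i -> 0 < xi i k.
Hypothesis Hupd : forall i, exists pt : point,
  box n T P (J i) (tau T J (J i) i) (Some (T i)) (P i (J i)) pt /\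
  P (S i) (J i) = P i (J i) - grad (J i) pt / gam i * dt T J i.
Variables alpha epsF epsB : R.
Hypothesis Halpha : 2 <= alpha.
Hypothesis HepsB : 0 < epsB.
Hypothesis A1 : forall i s, between s (P i (J i)) (P (S i) (J i)) ->
  phi (upd (P i) (J i) s) - phi (P i) - grad (J i) (P i) * (s - P i (J i))
    <= gam i / alpha * (s - P i (J i))^2.
Hypothesis A2 : forall i, gam i <= gbar (J i).
Hypothesis A3 : forall i,
  rsum (fun k => if Nat.eqb k (J i) then 0 else
          xi i k * HB n T P hess (J i) k (T i) (next_time T J k (S i)) (P i k)) n
    <= epsF * gam i.
Hypothesis A4 : forall i,
  rsum (fun k => if Nat.eqb k (J i) then 0 else
          maxinv J xi (J i) k (first_after J (J i) i) i
            * HB n T P hess k (J i) (tau T J (J i) i) (Some (T i)) (P i (J i))) n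
    <= epsB * gam i.
Hypothesis Hc2 : 0 < c2.

Lemma back_curv_nonneg i : (fa <= i < m)%nat -> 0 <= back_curv i.
Proof.
  intros Hi. apply (Hsup_nonneg hess (J i) j _ (upd (P m) j (P m j))).
  - apply (HB_is_lub (J i) j i m); auto; [lia|left; apply prevT_lt|apply T_le; lia].
  - apply box_upd, T_le. lia.
Qed.

Lemma xi_window_pos i : (fa <= i < m)%nat -> 0 < xi i j.
Proof. intros Hi. apply Hxi; auto. intros E. now apply (first_after_no_update j m i). Qed.

Lemma dt_window_le i : (fa <= i <= m)%nat -> T m - T i <= dt T J m.
Proof. intros Hi. unfold dt. pose proof (tau_le_T j m i ltac:(lia)). lra. Qed.

Lemma backward_terms_bound :
  rsum_from fa (fun i => xi i j * back_curv i * (dp P J i)^2 / dt T J i * (2 - c2 * (T m - T i))) m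
  >= (2 - c2) * backward_energy.
Proof.
  apply Rle_ge. unfold backward_energy. rewrite <- rsum_from_scal. apply rsum_from_le.
  intros i Hi. set (X := xi i j * back_curv i * (dp P J i)^2 / dt T J i).
  assert (0 <= X).
  { pose proof (back_curv_nonneg i Hi). pose proof (xi_window_pos i Hi). pose proof (dt_pos i).
    unfold X, Rdiv. apply Rmult_le_pos; [|left; apply Rinv_0_lt_compat; lra].
    apply Rmult_le_pos; [apply Rmult_le_pos; lra|apply pow2_ge_0]. }
  pose proof (dt_window_le i ltac:(lia)). pose proof (Hdt m). pose proof (T_le i m ltac:(lia)).
  assert (0 <= X * (c2 * (1 - (T m - T i)))) by (apply Rmult_le_pos; nra).
  lra.
Qed.

Lemma forward_terms_bound :
  forward_weight * ((dp P J m)^2 / dt T J m * 2) <= 2 * epsF * step_energy.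
Proof.
  unfold step_energy. pose proof (dt_pos m).
  assert (0 <= (dp P J m)^2 / dt T J m * 2).
  { unfold Rdiv. pose proof (pow2_ge_0 (dp P J m)). pose proof (Rinv_0_lt_compat _ H). nra. }
  replace (2 * epsF * (gam m * (dp P J m)^2 / dt T J m))
    with (epsF * gam m * ((dp P J m)^2 / dt T J m * 2)) by (field; lra).
  apply Rmult_le_compat_r; auto. apply A3.
Qed.

Lemma window_coord_ranges s : (fa <= s <= m)%nat -> forall k, (k < n)%nat -> k <> j ->
  coord_min P k fa (m - fa) <= P s k <= coord_max P k fa (m - fa).
Proof. intros Hs k _ _. apply coord_minmax_bounds. lia. Qed.

Lemma stale_gradient : exists gt,
  dp P J m = - gt / gam m * dt T J m /\ Rabs (gt - grad j (P m)) <= grad_drift.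
Proof.
  destruct (Hupd m) as (pt & Hbox & Hstep). exists (grad j pt). split.
  - unfold dp. rewrite Hstep. field. apply Rgt_not_eq, Hgam.
  - apply (grad_drift_bound j m fa pt (HJ m) (first_after_le j m)
             (first_after_no_update j m) (proj1 Hbox)).
    now apply box_tau_coord_ranges with (P m j).
Qed.

Lemma descent_bound :
  phi (P m) - phi (P (S m)) >= (1 - 1 / alpha) * step_energy - grad_drift * Rabs (dp P J m).
Proof.
  destruct stale_gradient as (gt & Hdp & Hgt).
  assert (Hbetween : between (P (S m) j) (P m j) (P (S m) j))
    by (unfold between; destruct (Rle_dec (P m j) (P (S m) j)); [left|right]; lra).
  pose proof (A1 m _ Hbetween) as H1.
  replace (phi (upd (P m) j (P (S m) j))) with (phi (P (S m))) in H1.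
  2:{ apply Hphi_n. intros i _. unfold upd. destruct (Nat.eqb_spec i j) as [->|]; auto. }
  fold (dp P J m) in H1.
  pose proof (Hgam m) as Hg. pose proof (dt_pos m) as Ht. pose proof (Hdt m) as Ht1.
  assert (Hstep : gt * dp P J m = - step_energy) by (unfold step_energy; rewrite Hdp; field; lra).
  assert (Hstale : Rabs ((gt - grad j (P m)) * dp P J m) <= grad_drift * Rabs (dp P J m))
    by (rewrite Rabs_mult; apply Rmult_le_compat_r; [apply Rabs_pos|auto]).
  pose proof (Rle_abs (- ((gt - grad j (P m)) * dp P J m))) as Hneg. rewrite Rabs_Ropp in Hneg.
  assert (Hquad : gam m / alpha * (dp P J m)^2 <= 1 / alpha * step_energy).
  { unfold step_energy, Rdiv. pose proof (Rinv_0_lt_compat alpha ltac:(lra)).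
    assert (1 <= / dt T J m) by (rewrite <- Rinv_1; apply Rinv_le_contravar; lra).
    assert (0 <= gam m * (dp P J m)^2) by (pose proof (pow2_ge_0 (dp P J m)); nra).
    assert (gam m * (dp P J m)^2 <= gam m * (dp P J m)^2 * / dt T J m) by nra.
    replace (gam m * / alpha * (dp P J m)^2) with (/ alpha * (gam m * (dp P J m)^2)) by ring.
    replace (1 * / alpha * (gam m * (dp P J m)^2 * / dt T J m))
      with (/ alpha * (gam m * (dp P J m)^2 * / dt T J m)) by ring.
    apply Rmult_le_compat_l; lra. }
  lra.
Qed.

Lemma grad_drift_sq_le : grad_drift^2 <= backward_energy * backward_weight.
Proof.
  apply rsum_from_Cauchy_Schwarz. intros i Hi.
  pose proof (back_curv_nonneg i Hi). pose proof (xi_window_pos i Hi). pose proof (dt_pos i).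
  pose proof (Rabs_pos (dp P J i)). pose proof (pow2_ge_0 (dp P J i)).
  repeat split.
  - apply Rmult_le_pos; lra.
  - unfold Rdiv. apply Rmult_le_pos; [|left; apply Rinv_0_lt_compat; lra].
    apply Rmult_le_pos; [apply Rmult_le_pos|]; lra.
  - unfold Rdiv. apply Rmult_le_pos; [apply Rmult_le_pos|left; apply Rinv_0_lt_compat]; lra.
  - right. rewrite <- (pow2_abs (dp P J i)). field. lra.
Qed.

Definition window_curv (k : nat) : R := HB n T P hess k j (tau T J j m) (Some (T m)) (P m j).

Lemma window_curv_is_lub k : (k < n)%nat ->
  Hsup_is_lub hess k j (box n T P j (tau T J j m) (Some (T m)) (P m j)).
Proof.
  intros Hk. apply (HB_is_lub k j fa m); auto using first_after_le.
  - rewrite tau_prevT. lra.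
  - apply tau_le_T, first_after_le.
Qed.

Lemma back_curv_le_window_curv i : (fa <= i < m)%nat -> back_curv i <= window_curv (J i).
Proof.
  intros Hi. apply (Hsup_mono hess (J i) j).
  - apply (HB_is_lub (J i) j i m); auto; [lia|left; apply prevT_lt|apply T_le; lia].
  - apply window_curv_is_lub, HJ.
  - intros q. apply box_start_mono, tau_le_T. lia.
Qed.

Lemma backward_weight_by_coord :
  backward_weight <= rsum (fun k => window_curv k * maxinv J xi j k fa m
                     * rsum_from fa (fun i => if Nat.eqb k (J i) then dt T J i else 0) m) n.
Proof.
  apply Rle_trans with
    (rsum_from fa (fun i => window_curv (J i) * maxinv J xi j (J i) fa m * dt T J i) m).
  - apply rsum_from_le. intros i Hi.
    pose proof (back_curv_nonneg i Hi). pose proof (back_curv_le_window_curv i Hi).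
    pose proof (dt_pos i). pose proof (Rinv_0_lt_compat _ (xi_window_pos i Hi)).
    assert (/ xi i j <= maxinv J xi j (J i) fa m) by (apply maxinv_ge; auto; lia).
    unfold Rdiv.
    rewrite (Rmult_comm (back_curv i * dt T J i)), <- Rmult_assoc, (Rmult_comm _ (back_curv i)).
    apply Rmult_le_compat_r; [lra|]. apply Rmult_le_compat; lra.
  - rewrite (rsum_from_group_by J (fun k i => window_curv k * maxinv J xi j k fa m * dt T J i)
               fa m n HJ).
    right. apply rsum_ext. intros k _. rewrite <- rsum_from_scal. apply rsum_ext. intros i _.
    destruct (Nat.leb fa i), (Nat.eqb k (J i)); ring.
Qed.

Lemma coord_dt_sum_le k : k <> j ->
  rsum_from fa (fun i => if Nat.eqb k (J i) then dt T J i else 0) m <= 1 + dt T J m.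
Proof.
  intros Hkj. pose proof (first_after_le j m).
  assert (Htau : tau T J j m <= prevT fa) by (rewrite tau_prevT; lra).
  pose proof (dt_sum_bound k fa (tau T J j m) Htau (m - fa)) as Hsum.
  replace (fa + (m - fa))%nat with m in Hsum by lia.
  eapply Rle_trans; [exact Hsum|]. unfold dt.
  pose proof (tau_le_T k m m (first_after_le k m)).
  pose proof (tau_le_T j m m (first_after_le j m)).
  unfold Rmax. destruct (Rle_dec _ _); lra.
Qed.

Lemma coord_dt_sum_self :
  rsum_from fa (fun i => if Nat.eqb j (J i) then dt T J i else 0) m = 0.
Proof.
  unfold rsum_from. rewrite (rsum_ext _ (fun _ => 0)); [apply rsum_const0|]. intros i Hi.
  destruct (Nat.leb_spec fa i); auto. destruct (Nat.eqb_spec j (J i)) as [E|]; auto.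
  exfalso. apply (first_after_no_update j m i); auto; lia.
Qed.

Lemma backward_weight_bound : backward_weight <= epsB * gam m * (1 + dt T J m).
Proof.
  eapply Rle_trans; [apply backward_weight_by_coord|].
  pose proof (Hdt m). pose proof (dt_pos m). pose proof (A4 m) as HA4.
  apply Rle_trans with
    (rsum (fun k => if Nat.eqb k j then 0 else maxinv J xi j k fa m * window_curv k) n * (1 + dt T J m)).
  - rewrite Rmult_comm, <- rsum_scal. apply rsum_le. intros k Hk.
    pose proof (Hsup_nonneg hess k j _ _ (window_curv_is_lub k Hk)
                  (box_upd j _ m (P m j) (tau_le_T j m m (first_after_le j m)))).
    pose proof (maxinv_nonneg J xi j k fa m).
    destruct (Nat.eqb_spec k j) as [->|Hkj].
    + rewrite coord_dt_sum_self. lra.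
    + pose proof (coord_dt_sum_le k Hkj).
      assert (0 <= window_curv k * maxinv J xi j k fa m) by (apply Rmult_le_pos; auto).
      apply Rle_trans with (window_curv k * maxinv J xi j k fa m * (1 + dt T J m));
        [apply Rmult_le_compat_l; auto|right; ring].
  - apply Rmult_le_compat_r; [lra|exact HA4].
Qed.

Lemma mixing_bound : grad_drift * Rabs (dp P J m) <= backward_energy + 2 * epsB * step_energy.
Proof.
  assert (Hsplit : grad_drift * Rabs (dp P J m)
                   <= backward_energy + (dp P J m)^2 / 4 * backward_weight).
  { unfold grad_drift, backward_energy, backward_weight.
    rewrite Rmult_comm, <- !rsum_from_scal, <- rsum_from_plus. apply rsum_from_le. intros i Hi.
    pose proof (xi_window_pos i Hi). pose proof (dt_pos i).
    pose proof (abs_mul_le_weighted (back_curv i) (xi i j) (dt T J i) (dp P J i) (dp P J m)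
                  (back_curv_nonneg i Hi) ltac:(auto) ltac:(auto)).
    replace (Rabs (dp P J m) * (back_curv i * Rabs (dp P J i)))
      with (back_curv i * Rabs (dp P J i) * Rabs (dp P J m)) by ring.
    eapply Rle_trans; [eassumption|]. right. field. lra. }
  pose proof backward_weight_bound. pose proof (Hdt m). pose proof (dt_pos m).
  pose proof (Hgam m). pose proof (pow2_ge_0 (dp P J m)).
  assert ((dp P J m)^2 / 4 * backward_weight <= 2 * epsB * step_energy).
  { unfold step_energy.
    apply Rle_trans with ((dp P J m)^2 / 4 * (epsB * gam m * (1 + dt T J m))).
    { apply Rmult_le_compat_l; [lra|auto]. }
    apply (Rmult_le_reg_r (dt T J m)); auto. unfold Rdiv. field_simplify; [|lra].
    assert (0 <= (dp P J m)^2 * epsB * gam m) by (apply Rmult_le_pos; [apply Rmult_le_pos|]; lra).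
    assert ((1 + dt T J m) * dt T J m <= 8) by nra. nra. }
  lra.
Qed.

Lemma window_grad_drift s : (fa <= s <= m)%nat -> Rabs (grad j (P s) - grad j (P m)) <= grad_drift.
Proof.
  intros Hs.
  apply (grad_drift_bound j m fa (P s) (HJ m) (first_after_le j m) (first_after_no_update j m)).
  - symmetry. apply P_const; [lia|]. intros; apply (first_after_no_update j m); lia.
  - now apply window_coord_ranges.
Qed.

(* The splitting weight 4 eps_B yields the constants 1 + 4 eps_B and
   (1 + 1/(4 eps_B)) * 4 * 2 eps_B = 2 + 8 eps_B of the theorem. *)
Lemma grad_sq_integral_bound gt : Rabs (gt - grad j (P m)) <= grad_drift ->
  0 <= Rint (fun t' => (grad j (traj T P t'))^2) (tau T J j m) (T m)
    <= ((1 + 4 * epsB) * gt^2 + (1 + / (4 * epsB)) * (4 * grad_drift^2)) * dt T J m.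
Proof.
  intros Hgt. pose proof (first_after_le j m) as Hfa. unfold dt.
  apply Rint_bound; [|apply tau_le_T; auto|].
  - rewrite tau_prevT. replace (T m) with (T (fa + (m - fa))%nat) by (f_equal; lia).
    apply (Riemann_integrable_along_schedule _ (fun s => (grad j (P s))^2)).
    intros s x Hx. unfold traj. rewrite (state_idx_eq x s); auto.
    destruct s as [|s]; simpl in Hx; [left|right; simpl]; repeat split; lia || lra.
  - intros x Hx. rewrite tau_prevT in Hx.
    destruct (traj_window fa m x Hfa ltac:(lra) ltac:(lra)) as (s & Hs & ->).
    split; [apply pow2_ge_0|].
    pose proof (window_grad_drift s Hs).
    assert (Hfar : Rabs (grad j (P s) - gt) <= 2 * grad_drift).
    { pose proof (Rabs_triang (grad j (P s) - grad j (P m)) (grad j (P m) - gt)).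
      rewrite (Rabs_minus_sym (grad j (P m))) in *.
      replace (grad j (P s) - grad j (P m) + (grad j (P m) - gt)) with (grad j (P s) - gt) in * by ring.
      lra. }
    replace (grad j (P s)) with (gt + (grad j (P s) - gt)) by ring.
    eapply Rle_trans; [apply (sqr_plus_le_weighted _ _ (4 * epsB)); lra|].
    assert ((grad j (P s) - gt)^2 <= 4 * grad_drift^2).
    { rewrite <- pow2_abs. pose proof (Rabs_pos (grad j (P s) - gt)). nra. }
    assert (0 < / (4 * epsB)) by (apply Rinv_0_lt_compat; lra). nra.
Qed.

Lemma backward_energy_nonneg : 0 <= backward_energy.
Proof.
  apply rsum_from_nonneg. intros i Hi.
  pose proof (back_curv_nonneg i Hi). pose proof (xi_window_pos i Hi). pose proof (dt_pos i).
  unfold Rdiv. apply Rmult_le_pos; [|left; apply Rinv_0_lt_compat; lra].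
  apply Rmult_le_pos; [apply Rmult_le_pos; lra|apply pow2_ge_0].
Qed.

Lemma grad_drift_sq_scaled_le : grad_drift^2 * dt T J m / gam m <= 2 * epsB * backward_energy.
Proof.
  pose proof (Hgam m). pose proof (dt_pos m). pose proof (Hdt m). pose proof backward_energy_nonneg.
  assert (grad_drift^2 <= backward_energy * (epsB * gam m * (1 + dt T J m))).
  { eapply Rle_trans; [apply grad_drift_sq_le|].
    apply Rmult_le_compat_l; auto using backward_weight_bound. }
  apply (Rmult_le_reg_r (gam m)); auto. unfold Rdiv. rewrite Rmult_assoc, Rinv_l, Rmult_1_r by lra.
  assert (0 <= backward_energy * epsB) by (apply Rmult_le_pos; lra).
  assert ((1 + dt T J m) * dt T J m <= 2) by nra. nra.
Qed.

Hypothesis Hc1 : 0 < c1.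

Lemma gradient_integral_bound :
  c1 * (Rint (fun t' => (grad j (traj T P t'))^2) (tau T J j m) (T m) / gbar j)
  <= c1 * (1 + 4 * epsB) * step_energy + c1 * (2 + 8 * epsB) * backward_energy.
Proof.
  destruct stale_gradient as (gt & Hdp & Hgt).
  destruct (grad_sq_integral_bound gt Hgt) as [Hint0 Hint].
  set (Ri := Rint _ _ _) in *.
  pose proof (Hgam m). pose proof (A2 m). pose proof (dt_pos m).
  pose proof grad_drift_sq_scaled_le as Hdrift. pose proof backward_energy_nonneg.
  assert (Hgbar : Ri / gbar j <= Ri / gam m)
    by (unfold Rdiv; apply Rmult_le_compat_l; [lra|apply Rinv_le_contravar; lra]).
  assert (Hstep : gt^2 * dt T J m / gam m = step_energy)
    by (unfold step_energy; rewrite Hdp; field; lra).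
  assert (Hbound : Ri / gam m
          <= (1 + 4 * epsB) * step_energy + (1 + / (4 * epsB)) * 4 * (grad_drift^2 * dt T J m / gam m)).
  { rewrite <- Hstep. apply Rle_trans with
      (((1 + 4 * epsB) * gt^2 + (1 + / (4 * epsB)) * (4 * grad_drift^2)) * dt T J m / gam m).
    - unfold Rdiv. apply Rmult_le_compat_r; [left; apply Rinv_0_lt_compat|]; lra.
    - right. field. lra. }
  assert (0 < / (4 * epsB)) by (apply Rinv_0_lt_compat; lra).
  assert ((1 + / (4 * epsB)) * 4 * (grad_drift^2 * dt T J m / gam m)
          <= (1 + / (4 * epsB)) * 4 * (2 * epsB * backward_energy))
    by (apply Rmult_le_compat_l; lra).
  assert (Hcoef : (1 + / (4 * epsB)) * 4 * (2 * epsB * backward_energy)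
                  = (2 + 8 * epsB) * backward_energy) by (field; lra).
  replace (c1 * (1 + 4 * epsB) * step_energy + c1 * (2 + 8 * epsB) * backward_energy)
    with (c1 * ((1 + 4 * epsB) * step_energy + (2 + 8 * epsB) * backward_energy)) by ring.
  apply Rmult_le_compat_l; lra.
Qed.

Lemma Phi_drop_lower_bound :
  Phi n phi grad hess T J P gbar xi c1 c2 m (T m) - Phi n phi grad hess T J P gbar xi c1 c2 (S m) (T m)
  >= (1 - 1 / alpha - 2 * epsB - c1 * (1 + 4 * epsB) - 2 * epsF) * step_energy
     + (1 - c2 - c1 * (2 + 8 * epsB)) * backward_energy.
Proof.
  rewrite Phi_drop_eq.
  pose proof descent_bound. pose proof mixing_bound. pose proof gradient_integral_bound.
  pose proof backward_terms_bound. pose proof forward_terms_bound.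
  lra.
Qed.

End AGD.

Theorem mainTheorem4
  (n : nat) (phi : point -> R) (grad : nat -> point -> R)
  (hess : nat -> nat -> point -> R)
  (Hphi_n : forall x y : point, (forall i, (i < n)%nat -> x i = y i) -> phi x = phi y)
  (Hgrad : forall k x, (k < n)%nat ->
     derivable_pt_lim (fun s => phi (upd x k s)) (x k) (grad k x))
  (Hhess : forall k l x, (k < n)%nat -> (l < n)%nat ->
     derivable_pt_lim (fun s => grad l (upd x k s)) (x k) (hess k l x))
  (Hcont : forall k l x, (k < n)%nat -> (l < n)%nat ->
     forall eps, 0 < eps -> exists d, 0 < d /\
       forall y : point, (forall i, (i < n)%nat -> Rabs (y i - x i) < d) ->
         Rabs (hess k l y - hess k l x) < eps)
  (Hconv : forall (x y : point) (lam : R), 0 <= lam <= 1 ->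
     phi (fun i => lam * x i + (1 - lam) * y i) <= lam * phi x + (1 - lam) * phi y)
  (Hmin0 : (forall x, 0 <= phi x) /\ (exists x, phi x = 0))
  (T : nat -> R) (J : nat -> nat) (P : nat -> point)
  (HT0 : 0 < T O)
  (HTinc : forall i, T i < T (S i))
  (HTunb : forall x, exists i, x < T i)
  (HJ : forall i, (J i < n)%nat)
  (gam : nat -> R) (gbar : nat -> R) (xi : nat -> nat -> R)
  (Hgam : forall i, 0 < gam i)
  (Hxi : forall i k, (k < n)%nat -> k <> J i -> 0 < xi i k)
  (Hdt : forall i, dt T J i <= 1)
  (Hupd_other : forall i k, k <> J i -> P (S i) k = P i k)
  (Hupd : forall i, exists pt : point,
     box n T P (J i) (tau T J (J i) i) (Some (T i)) (P i (J i)) pt /\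
     P (S i) (J i) = P i (J i) - grad (J i) pt / gam i * dt T J i)
  (alpha epsF epsB : R)
  (Halpha : 2 <= alpha) (HepsF : 0 < epsF) (HepsB : 0 < epsB)
  (Hconst : 1 / alpha + 2 * epsB + 2 * epsF < 1)
  (A1 : forall i s, between s (P i (J i)) (P (S i) (J i)) ->
     phi (upd (P i) (J i) s) - phi (P i) - grad (J i) (P i) * (s - P i (J i))
       <= gam i / alpha * (s - P i (J i))^2)
  (A2 : forall i, gam i <= gbar (J i))
  (A3 : forall i,
     rsum (fun k => if Nat.eqb k (J i) then 0 else
             xi i k * HB n T P hess (J i) k (T i) (next_time T J k (S i)) (P i k)) n
       <= epsF * gam i)
  (A4 : forall i,
     rsum (fun k => if Nat.eqb k (J i) then 0 else
             maxinv J xi (J i) k (first_after J (J i) i) i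
               * HB n T P hess k (J i) (tau T J (J i) i) (Some (T i)) (P i (J i))) n
       <= epsB * gam i)
  (c1 c2 : R) (Hc1 : 0 < c1) (Hc2 : 0 < c2)
  (m : nat) :
  Phi n phi grad hess T J P gbar xi c1 c2 m (T m)
    - Phi n phi grad hess T J P gbar xi c1 c2 (S m) (T m)
  >= (1 - 1 / alpha - 2 * epsB - c1 * (1 + 4 * epsB) - 2 * epsF)
        * (gam m * (dp P J m)^2 / dt T J m)
     + (1 - c2 - c1 * (2 + 8 * epsB))
        * rsum (fun i =>
             if Nat.leb (first_after J (J m) m) i then
               xi i (J m) * HB n T P hess (J i) (J m) (T i) (Some (T m)) (P m (J m))
                 * (dp P J i)^2 / dt T J i
             else 0) m.
Proof. eapply Phi_drop_lower_bound; eauto. Qed.
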